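(* Let $(S,\ast)$ and $(T,\ast')$ be adequate commutative partial semigroups, let $h:S\to T$ be a surjective partial semigroup homomorphism, and let $\tilde h:\beta S\to\beta T$ be the continuous extension of $h$. Suppose $\tilde h$ maps $\delta S$ onto $\delta T$. Then (a) $\tilde h(K(\delta S))=K(\delta T)$; (b) if $A$ is a central set in $S$, then $h(A)$ is a central set in $T$; (c) if $A$ is a central set in $T$, then $h^{-1}(A)$ is a central set in $S$.
   Context: A partial semigroup is a pair $(S,\ast)$ where $\ast$ is an operation defined on a subset of $S\times S$ such that $(x\ast y)\ast z=x\ast(y\ast z)$ in the sense that if either side is defined, so is the other and they are equal; commutative means $x\ast y=y\ast x$ whenever defined. $\phi_S(s)=\{t: s\ast t\text{ defined}\}$, $\sigma_S(H)=\bigcap_{s\in H}\phi_S(s)$ for finite nonempty $H$; $S$ is adequate if all $\sigma_S(H)\ne\emptyset$. A map $h:S\to T$ is a partial semigroup homomorphism if whenever $y\in\phi_S(x)$, $h(y)\in\phi_T(h(x))$ and $h(x\ast y)=h(x)\ast' h(y)$. $\beta S$ is the Stone–Čech compactification of discrete $S$ (ultrafilters on $S$); $\tilde h(p)=\{B\subseteq T: h^{-1}(B)\in p\}$. $\delta S=\bigcap_{x\in S}\overline{\phi_S(x)}$, where $\overline{A}=\{p\in\beta S: A\in p\}$, with operation $p\ast q=\{A\subseteq S:\{s: s^{-1}A\in q\}\in p\}$, $s^{-1}A=\{t\in\phi_S(s): s\ast t\in A\}$; $\delta S$ is a compact right topological semigroup with smallest two-sided ideal $K(\delta S)$ (similarly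 for $T$). $A\subseteq S$ is central if there is an idempotent $p\in K(\delta S)\cap\overline{A}$. *)

From Stdlib Require Import List.
Set Implicit Arguments.

Section PSG.
Variable S : Type.
Variable op : S -> S -> option S.

Definition ps_assoc : Prop :=
  forall x y z,
    match op x y with Some u => op u z | None => None end =
    match op y z with Some v => op x v | None => None end.

Definition ps_comm : Prop := forall x y, op x y = op y x.

Definition phi (s : S) : S -> Prop := fun t => op s t <> None.

Definition adequate : Prop :=
  forall H : list S, H <> nil -> exists t, forall s, In s H -> phi s t.

Definition ultrafilter (p : (S -> Prop) -> Prop) : Prop :=
  p (fun _ => True) /\ ~ p (fun _ => False) /\
  (forall A B : S -> Prop, p A -> (forall x, A x -> B x) -> p B) /\
  (forall A B : S -> Prop, p A -> p B -> p (fun x => A x /\ B x)) /\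
  (forall A : S -> Prop, p A \/ p (fun x => ~ A x)).

(* delta S = intersection over x of closure of phi_S(x) *)
Definition deltaS (p : (S -> Prop) -> Prop) : Prop :=
  ultrafilter p /\ forall x, p (phi x).

Definition sinv (s : S) (A : S -> Prop) : S -> Prop :=
  fun t => exists u, op s t = Some u /\ A u.

Definition uf_mul (p q : (S -> Prop) -> Prop) : (S -> Prop) -> Prop :=
  fun A => p (fun s => q (sinv s A)).

Definition is_ideal (I : ((S -> Prop) -> Prop) -> Prop) : Prop :=
  (exists p, I p) /\ (forall p, I p -> deltaS p) /\
  (forall p q, deltaS p -> I q -> I (uf_mul p q) /\ I (uf_mul q p)).

Definition Kdelta (p : (S -> Prop) -> Prop) : Prop :=
  deltaS p /\ forall I, is_ideal I -> I p.

Definition central (A : S -> Prop) : Prop :=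
  exists p, Kdelta p /\ uf_mul p p = p /\ p A.

End PSG.

Definition ps_hom (S T : Type) (opS : S -> S -> option S) (opT : T -> T -> option T)
  (h : S -> T) : Prop :=
  forall x y z, opS x y = Some z -> opT (h x) (h y) = Some (h z).

(* continuous extension of h to beta S *)
Definition hext (S T : Type) (h : S -> T) (p : (S -> Prop) -> Prop) : (T -> Prop) -> Prop :=
  fun B => p (fun s => B (h s)).

Definition img (S T : Type) (h : S -> T) (A : S -> Prop) : T -> Prop :=
  fun t => exists s, A s /\ h s = t.

Definition preim (S T : Type) (h : S -> T) (B : T -> Prop) : S -> Prop :=
  fun s => B (h s).

(** Points of βS are ultrafilters on S, and a closed set of ultrafilters is a
   set C such that every ultrafilter all of whose members are met by C lies in
   C. Compactness of βS is the ultrafilter lemma: a chain of nonempty closed sets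
   has nonempty intersection, so by Zorn's lemma every nonempty closed set with
   a property stable under intersections contains a minimal one. Right
   translations [x |-> x * m] and the extension [hext h] have the form
   [x |-> x o g], so they map closed sets to closed sets and have closed fibres.

   A minimal closed left ideal of δS lies in K(δS), and a minimal closed
   subsemigroup [M] of δS consists of idempotents: for [x] in [M], both [M x]
   and [{z in M | z x = x}] are closed subsemigroups of [M] (Ellis–Numakura).
   Since [hext h] is a homomorphism from δS onto δT, preimages of ideals of δT
   are ideals of δS, and the image of K(δS) is an ideal of δT; this gives (a)
   and (b). For (c), take [p] in K(δS) over an idempotent [q] in K(δT) with
   [A] in [q]: the fibre over [q] in the closed left ideal [δS p] is a closed
   subsemigroup, and its idempotent lies in K(δS) and contains [h^-1(A)]. *)

From Stdlib Require Import Classical FunctionalExtensionality PropExtensionality.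
From mathcomp Require boolp classical_sets filter.
Set Implicit Arguments.
Unset Strict Implicit.
Set Bullet Behavior "Strict Subproofs".

Lemma zorn_above (X : Type) (P : X -> Prop) (R : X -> X -> Prop) (x0 : X) :
  (forall x, R x x) -> (forall x y z, R x y -> R y z -> R x z) -> P x0 ->
  (forall C : X -> Prop, (forall c, C c -> P c) ->
     (forall a b, C a -> C b -> R a b \/ R b a) -> (exists c, C c) ->
     exists u, P u /\ forall c, C c -> R c u) ->
  exists m, P m /\ R x0 m /\ forall y, P y -> R m y -> R y m.
Proof.
intros Rxx Rtrans P0 Hchain.
pose (Y := {x : X | P x /\ R x0 x}).
pose (y0 := exist (fun x => P x /\ R x0 x) x0 (conj P0 (Rxx x0)) : Y).
pose (RY := fun a b : Y => boolp.asbool (R (proj1_sig a) (proj1_sig b))).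
destruct (@classical_sets.ZL_preorder Y y0 RY) as [m Hm].
- intros a; apply boolp.asboolT, Rxx.
- intros a b c Hab Hbc; apply boolp.asboolT.
  apply boolp.asboolW in Hab; apply boolp.asboolW in Hbc; eauto.
- intros A HA.
  destruct (classic (exists a, A a)) as [[a Aa]|A0].
  + destruct (Hchain (fun x => exists a, A a /\ proj1_sig a = x)) as [u [Pu Hu]].
    * intros c [a' [_ <-]]; apply (proj2_sig a').
    * intros x y [a1 [A1 <-]] [b1 [B1 <-]].
      destruct (HA a1 b1 A1 B1) as [H|H]; apply boolp.asboolW in H; auto.
    * exists (proj1_sig a); eauto.
    * assert (R0u : R x0 u) by (apply Rtrans with (proj1_sig a); [apply (proj2_sig a)|eauto]).
      exists (exist _ u (conj Pu R0u)).
      intros b Ab; apply boolp.asboolT; simpl; eauto.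
  + exists y0; intros b Ab; exfalso; eauto.
- exists (proj1_sig m). destruct (proj2_sig m) as [Pm R0m].
  split; [exact Pm|split; [exact R0m|]].
  intros y Py Rmy.
  assert (R0y : R x0 y) by eauto.
  exact (boolp.asboolW (Hm (exist _ y (conj Py R0y)) (boolp.asboolT Rmy))).
Qed.

Section Ultrafilters.
Variable X : Type.
Implicit Types (p r : (X -> Prop) -> Prop) (A B : X -> Prop).

Lemma uf_True p : ultrafilter p -> p (fun _ => True).
Proof. intros (H & _); exact H. Qed.

Lemma uf_not_False p : ultrafilter p -> ~ p (fun _ => False).
Proof. intros (_ & H & _); exact H. Qed.

Lemma uf_mono p A B : ultrafilter p -> p A -> (forall x, A x -> B x) -> p B.
Proof. intros (_ & _ & H & _); exact (H A B). Qed.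

Lemma uf_and p A B : ultrafilter p -> p A -> p B -> p (fun x => A x /\ B x).
Proof. intros (_ & _ & _ & H & _); exact (H A B). Qed.

Lemma uf_or_not p A : ultrafilter p -> p A \/ p (fun x => ~ A x).
Proof. intros (_ & _ & _ & _ & H); exact (H A). Qed.

Lemma uf_not_both p A : ultrafilter p -> p A -> p (fun x => ~ A x) -> False.
Proof.
intros Up pA pnA. apply (uf_not_False Up).
apply (uf_mono Up (uf_and Up pA pnA)). intros x [Ax nAx]; exact (nAx Ax).
Qed.

Lemma uf_not p A : ultrafilter p -> ~ p A -> p (fun x => ~ A x).
Proof. intros Up npA. destruct (uf_or_not A Up); tauto. Qed.

Lemma uf_agree p (C A B : X -> Prop) : ultrafilter p -> p C ->
  (forall x, C x -> (A x <-> B x)) -> p A -> p B.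
Proof.
intros Up pC CAB pA. apply (uf_mono Up (uf_and Up pC pA)).
intros x [Cx Ax]; exact (proj1 (CAB x Cx) Ax).
Qed.

Lemma uf_sub_eq p r : ultrafilter p -> ultrafilter r -> (forall A, r A -> p A) -> p = r.
Proof.
intros Up Ur rp. apply functional_extensionality; intros A.
apply propositional_extensionality; split; [|exact (rp A)].
intros pA. destruct (uf_or_not A Ur) as [rA|rnA]; [exact rA|].
exfalso; exact (uf_not_both Up pA (rp _ rnA)).
Qed.

Lemma uf_extend (F : (X -> Prop) -> Prop) :
  filter.ProperFilter F -> exists p, ultrafilter p /\ forall A, F A -> p A.
Proof.
intros PF. destruct (filter.ultraFilterLemma PF) as [p [Up Fp]].
exists p; split; [|exact Fp].
assert (pC := fun A => filter.in_ultra_setVsetC A Up).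
destruct Up as [[p0 [pT pI pS]] _].
split; [exact pT|split; [exact p0|split; [|split; [exact pI|exact pC]]]].
intros A B pA AB; exact (pS A B AB pA).
Qed.

Definition closed (C : ((X -> Prop) -> Prop) -> Prop) : Prop :=
  forall r, ultrafilter r -> (forall A, r A -> exists c, C c /\ c A) -> C r.

Definition nonempty_closed (C : ((X -> Prop) -> Prop) -> Prop) : Prop :=
  closed C /\ (exists c, C c) /\ forall c, C c -> ultrafilter c.

Lemma mem_closed C r : closed C -> (forall c, C c -> ultrafilter c) -> ultrafilter r ->
  (forall A, (forall c, C c -> c A) -> r A) -> C r.
Proof.
intros Cc CU Ur rC. apply (Cc r Ur). intros A rA.
apply NNPP; intros N. apply (uf_not_both Ur rA), rC.
intros c Cc'. apply (uf_not (CU c Cc')). intros cA; apply N; eauto.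
Qed.

Lemma closed_meet (F : (((X -> Prop) -> Prop) -> Prop) -> Prop) :
  (forall D, F D -> closed D) -> closed (fun c => forall D, F D -> D c).
Proof.
intros HF r Ur rF D FD. apply (HF D FD r Ur). intros A rA.
destruct (rF A rA) as [c [Fc cA]]. exists c; split; [exact (Fc D FD)|exact cA].
Qed.

Lemma closed_chain_meet (F : (((X -> Prop) -> Prop) -> Prop) -> Prop) :
  (forall D, F D -> nonempty_closed D) ->
  (forall D E, F D -> F E -> (forall c, D c -> E c) \/ (forall c, E c -> D c)) ->
  (exists D, F D) -> exists r, forall D, F D -> D r.
Proof.
intros HF Hchain [D0 FD0].
pose (G := fun A => exists D, F D /\ forall c, D c -> c A).
assert (PG : filter.ProperFilter G).
{ split; [|split].
  - intros [D [FD DA]]. destruct (HF D FD) as (_ & [c Dc] & DU).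
    exact (uf_not_False (DU c Dc) (DA c Dc)).
  - exists D0; split; [exact FD0|]. intros c Dc.
    destruct (HF D0 FD0) as (_ & _ & DU); exact (uf_True (DU c Dc)).
  - intros A B [D1 [F1 H1]] [D2 [F2 H2]].
    destruct (HF D1 F1) as (_ & _ & DU1); destruct (HF D2 F2) as (_ & _ & DU2).
    destruct (Hchain D1 D2 F1 F2) as [D12|D21].
    + exists D1; split; [exact F1|]. intros c Dc.
      exact (uf_and (DU1 c Dc) (H1 c Dc) (H2 c (D12 c Dc))).
    + exists D2; split; [exact F2|]. intros c Dc.
      exact (uf_and (DU2 c Dc) (H1 c (D21 c Dc)) (H2 c Dc)).
  - intros A B AB [D [FD DA]]. exists D; split; [exact FD|].
    destruct (HF D FD) as (_ & _ & DU). intros c Dc; exact (uf_mono (DU c Dc) (DA c Dc) AB). }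
destruct (uf_extend PG) as [r [Ur Gr]]. exists r. intros D FD.
destruct (HF D FD) as (Dc & _ & DU).
apply (mem_closed Dc DU Ur). intros A DA. apply Gr. exists D; auto.
Qed.

Lemma minimal_closed (Q : (((X -> Prop) -> Prop) -> Prop) -> Prop) X0 :
  (forall F, (exists D, F D) -> (forall D, F D -> Q D) -> Q (fun c => forall D, F D -> D c)) ->
  nonempty_closed X0 -> Q X0 ->
  exists M, (forall c, M c -> X0 c) /\ nonempty_closed M /\ Q M /\
    forall Y, nonempty_closed Y -> Q Y -> (forall c, Y c -> M c) -> forall c, M c -> Y c.
Proof.
intros HQ NX0 QX0.
destruct (@zorn_above _ (fun C => nonempty_closed C /\ Q C)
            (fun C D => forall c, D c -> C c) X0) as [M [[NM QM] [MX0 Mmin]]]; auto.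
- intros F HF Hchain [D0 FD0].
  exists (fun c => forall D, F D -> D c). split; [split; [split; [|split]|]|].
  + apply closed_meet. intros D FD; apply (HF D FD).
  + apply closed_chain_meet; [intros D FD; apply (HF D FD)| |exists D0; exact FD0].
    intros D E FD FE; destruct (Hchain D E FD FE); auto.
  + intros c Fc. destruct (HF D0 FD0) as [(_ & _ & DU) _]. exact (DU c (Fc D0 FD0)).
  + apply HQ; [exists D0; exact FD0|]. intros D FD; apply (HF D FD).
  + intros D FD c Fc; exact (Fc D FD).
- exists M; split; [exact MX0|split; [exact NM|split; [exact QM|]]].
  intros Y NY QY YM. apply Mmin; auto.
Qed.

End Ultrafilters.

Section Pullback.
Variables (X Y : Type) (g : (Y -> Prop) -> (X -> Prop)).
Variable C : ((X -> Prop) -> Prop) -> Prop.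
Hypotheses (C_closed : closed C) (C_uf : forall c, C c -> ultrafilter c).
Hypothesis C_pull_uf : forall c, C c -> ultrafilter (fun B => c (g B)).

Lemma closed_image :
  (forall A B, (forall y, A y -> B y) -> forall x, g A x -> g B x) ->
  closed (fun r => exists c, C c /\ (fun B => c (g B)) = r).
Proof.
intros g_mono r Ur rC.
pose (G := fun B : X -> Prop => exists A, r A /\ forall c, C c -> c (g A) -> c B).
assert (PG : filter.ProperFilter G).
{ split; [|split].
  - intros [A [rA GA]]. destruct (rC A rA) as [y [[c [Cc <-]] cA]].
    exact (uf_not_False (C_uf Cc) (GA c Cc cA)).
  - exists (fun _ => True); split; [exact (uf_True Ur)|].
    intros c Cc _; exact (uf_True (C_uf Cc)).
  - intros B1 B2 [A1 [rA1 G1]] [A2 [rA2 G2]].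
    exists (fun y => A1 y /\ A2 y); split; [exact (uf_and Ur rA1 rA2)|].
    intros c Cc cA. pose proof (C_uf Cc) as Uc.
    assert (cA1 : c (g A1)) by (apply (uf_mono Uc cA), g_mono; tauto).
    assert (cA2 : c (g A2)) by (apply (uf_mono Uc cA), g_mono; tauto).
    exact (uf_and Uc (G1 c Cc cA1) (G2 c Cc cA2)).
  - intros B1 B2 B12 [A [rA GA]]. exists A; split; [exact rA|].
    intros c Cc cA; exact (uf_mono (C_uf Cc) (GA c Cc cA) B12). }
destruct (uf_extend PG) as [p [Up Gp]].
assert (Cp : C p).
{ apply (mem_closed C_closed C_uf Up). intros B CB. apply Gp.
  exists (fun _ => True); split; [exact (uf_True Ur)|]. intros c Cc _; exact (CB c Cc). }
exists p; split; [exact Cp|].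
apply (uf_sub_eq (C_pull_uf Cp) Ur). intros A rA. apply Gp. exists A; auto.
Qed.

Lemma closed_fiber q : ultrafilter q -> closed (fun c => C c /\ (fun B => c (g B)) = q).
Proof.
intros Uq r Ur rF.
assert (Cr : C r).
{ apply (C_closed Ur). intros A rA. destruct (rF A rA) as [c [[Cc _] cA]]; eauto. }
split; [exact Cr|]. apply (uf_sub_eq (C_pull_uf Cr) Uq). intros B qB.
apply NNPP; intros N. destruct (rF _ (uf_not Ur N)) as [c [[Cc Ec] cN]].
rewrite <- Ec in qB. exact (uf_not_both (C_uf Cc) qB cN).
Qed.

End Pullback.

Section DeltaSemigroup.
Variables (S : Type) (op : S -> S -> option S).
Implicit Types (p q r m x y : (S -> Prop) -> Prop) (A B : S -> Prop).

Lemma sinv_mono s A B t : (forall u, A u -> B u) -> sinv op s A t -> sinv op s B t.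
Proof. intros AB [u [E Au]]; exists u; auto. Qed.

Lemma delta_uf p : deltaS op p -> ultrafilter p.
Proof. intros [Up _]; exact Up. Qed.

Lemma delta_closed : closed (deltaS op).
Proof.
intros r Ur rD. split; [exact Ur|]. intros s.
apply NNPP; intros N. destruct (rD _ (uf_not Ur N)) as [c [[Uc Dc] cN]].
exact (uf_not_both Uc (Dc s) cN).
Qed.

Lemma mul_uf p q : ultrafilter p -> deltaS op q -> ultrafilter (uf_mul op p q).
Proof.
intros Up [Uq Dq]. unfold uf_mul.
split; [|split; [|split; [|split]]].
- apply (uf_mono Up (uf_True Up)). intros s _.
  apply (uf_mono Uq (Dq s)). intros t st. unfold phi in st.
  destruct (op s t) as [u|] eqn:E; [exists u; auto|congruence].
- intros H. apply (uf_not_False Up). apply (uf_mono Up H). intros s Hs.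
  apply (uf_not_False Uq). apply (uf_mono Uq Hs). intros t [u [_ F]]; exact F.
- intros A B HA AB. apply (uf_mono Up HA). intros s Hs.
  apply (uf_mono Uq Hs). intros t; apply sinv_mono; exact AB.
- intros A B HA HB. apply (uf_mono Up (uf_and Up HA HB)). intros s [HsA HsB].
  apply (uf_mono Uq (uf_and Uq HsA HsB)). intros t [[u [E1 Au]] [u' [E2 Bu']]].
  rewrite E1 in E2; injection E2 as <-. exists u; auto.
- intros A. destruct (uf_or_not (fun s => q (sinv op s A)) Up) as [H|H]; [left; exact H|right].
  apply (uf_mono Up H). intros s Hs. apply (uf_not Uq) in Hs.
  apply (uf_mono Uq (uf_and Uq Hs (Dq s))). intros t [Ht st].
  unfold phi in st. destruct (op s t) as [u|] eqn:E; [|congruence].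
  exists u; split; [exact E|]. intros Au; apply Ht; exists u; auto.
Qed.

Lemma closed_mulr C m : closed C -> (forall c, C c -> ultrafilter c) -> deltaS op m ->
  closed (fun y => exists x, C x /\ uf_mul op x m = y).
Proof.
intros Cc CU Dm.
apply (closed_image (g := fun A s => m (sinv op s A)) Cc CU).
- intros c Cc'; exact (mul_uf (CU c Cc') Dm).
- intros A B AB s Hs. apply (uf_mono (delta_uf Dm) Hs). intros t; apply sinv_mono; exact AB.
Qed.

Lemma closed_mulr_fiber C m q : closed C -> (forall c, C c -> ultrafilter c) ->
  deltaS op m -> ultrafilter q -> closed (fun x => C x /\ uf_mul op x m = q).
Proof.
intros Cc CU Dm Uq.
apply (closed_fiber (g := fun A s => m (sinv op s A)) Cc CU); [|exact Uq].
intros c Cc'; exact (mul_uf (CU c Cc') Dm).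
Qed.

Hypothesis assoc : ps_assoc op.

Lemma mul_delta p q : deltaS op p -> deltaS op q -> deltaS op (uf_mul op p q).
Proof.
intros [Up Dp] [Uq Dq]. split; [exact (mul_uf Up (conj Uq Dq))|].
intros s. apply (uf_mono Up (Dp s)). intros t st.
unfold phi in st. destruct (op s t) as [v|] eqn:E; [|congruence].
apply (uf_mono Uq (uf_and Uq (Dq t) (Dq v))). intros w [tw vw].
unfold phi in tw. destruct (op t w) as [u|] eqn:E2; [|congruence].
exists u; split; [exact E2|]. unfold phi.
pose proof (assoc s t w) as Hassoc. rewrite E, E2 in Hassoc.
rewrite <- Hassoc; exact vw.
Qed.

Lemma sinv_assoc s t u A : op s t = Some u ->
  forall v, sinv op u A v <-> sinv op t (sinv op s A) v.
Proof.
intros E v. pose proof (assoc s t v) as Hassoc. rewrite E in Hassoc. split.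
- intros [z [Ez Az]]. rewrite Ez in Hassoc.
  destruct (op t v) as [w|] eqn:E2; [|discriminate].
  exists w; split; [exact E2|]. exists z; auto.
- intros [w [Ew [z [Ez Az]]]]. rewrite Ew, Ez in Hassoc. exists z; auto.
Qed.

Lemma mul_assoc p q r : ultrafilter p -> deltaS op q -> ultrafilter r ->
  uf_mul op (uf_mul op p q) r = uf_mul op p (uf_mul op q r).
Proof.
intros Up [Uq Dq] Ur. apply functional_extensionality; intros A.
apply propositional_extensionality. unfold uf_mul.
assert (Hs : forall s, q (sinv op s (fun u => r (sinv op u A))) <->
                       q (fun t => r (sinv op t (sinv op s A)))).
{ intros s.
  assert (Ht : forall t, phi op s t ->
            (sinv op s (fun u => r (sinv op u A)) t <-> r (sinv op t (sinv op s A)))).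
  { intros t st. unfold phi in st. destruct (op s t) as [u|] eqn:E; [|congruence].
    assert (Ruv : r (sinv op u A) <-> r (sinv op t (sinv op s A))).
    { split; intros H; apply (uf_mono Ur H); intros v; apply (sinv_assoc A E). }
    split.
    - intros [u' [E' H]]. rewrite E in E'; injection E' as <-. exact (proj1 Ruv H).
    - intros H. exists u; split; [exact E|exact (proj2 Ruv H)]. }
  split; apply (uf_agree Uq (Dq s)); intros t st; [|symmetry]; exact (Ht t st). }
split; intros H; apply (uf_mono Up H); intros s; apply Hs.
Qed.

Definition left_ideal (L : ((S -> Prop) -> Prop) -> Prop) : Prop :=
  forall p q, deltaS op p -> L q -> L (uf_mul op p q).

Definition subsemigroup (L : ((S -> Prop) -> Prop) -> Prop) : Prop :=
  forall p q, L p -> L q -> L (uf_mul op p q).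

Lemma Kdelta_mull p x : Kdelta op p -> deltaS op x -> Kdelta op (uf_mul op x p).
Proof.
intros [Dp Kp] Dx. split; [exact (mul_delta Dx Dp)|].
intros I HI. pose proof (proj2 (proj2 HI)) as II.
exact (proj1 (II x p Dx (Kp I HI))).
Qed.

Lemma Kdelta_mulr p x : Kdelta op p -> deltaS op x -> Kdelta op (uf_mul op p x).
Proof.
intros [Dp Kp] Dx. split; [exact (mul_delta Dp Dx)|].
intros I HI. pose proof (proj2 (proj2 HI)) as II.
exact (proj2 (II x p Dx (Kp I HI))).
Qed.

Lemma Kdelta_exists : (exists p, deltaS op p) -> exists p, Kdelta op p.
Proof.
intros [p0 Dp0].
destruct (minimal_closed (Q := left_ideal) (X0 := deltaS op))
  as [M [MD [[_ [[l Ml] _]] [LM Mmin]]]].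
- intros F _ HF p q Dp Fq D FD. exact (HF D FD p q Dp (Fq D FD)).
- split; [exact delta_closed|split; [exists p0; exact Dp0|exact delta_uf]].
- exact mul_delta.
- exists l. split; [exact (MD l Ml)|]. intros I [[r Ir] [ID II]].
  pose (m := uf_mul op r l).
  assert (Im : I m) by exact (proj2 (II l r (MD l Ml) Ir)).
  assert (Mm : M m) by exact (LM r l (ID r Ir) Ml).
  assert (HM : forall y, M y -> exists x, deltaS op x /\ uf_mul op x m = y).
  { apply Mmin.
    - split; [|split].
      + exact (closed_mulr delta_closed delta_uf (MD m Mm)).
      + exists (uf_mul op p0 m), p0; auto.
      + intros y [x [Dx <-]]. exact (mul_uf (delta_uf Dx) (MD m Mm)).
    - intros p y Dp [x [Dx <-]]. exists (uf_mul op p x).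
      split; [exact (mul_delta Dp Dx)|].
      exact (mul_assoc (delta_uf Dp) Dx (delta_uf (MD m Mm))).
    - intros y [x [Dx <-]]. exact (LM x m Dx Mm). }
  destruct (HM l Ml) as [x [Dx Exl]]. rewrite <- Exl. exact (proj1 (II x m Dx Im)).
Qed.

Lemma closed_subsemigroup_idempotent X0 :
  nonempty_closed X0 -> (forall x, X0 x -> deltaS op x) -> subsemigroup X0 ->
  exists x, X0 x /\ uf_mul op x x = x.
Proof.
intros NX0 X0D SX0.
destruct (minimal_closed (Q := subsemigroup) (X0 := X0)) as [M [MX0 [[Mc [[x Mx] MU]] [SM Mmin]]]];
  [|exact NX0|exact SX0|].
{ intros F _ HF a b Fa Fb D FD. exact (HF D FD a b (Fa D FD) (Fb D FD)). }
assert (MD : forall c, M c -> deltaS op c) by auto.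
assert (Dx := MD x Mx).
assert (M_sub_Mx : forall y, M y -> exists z, M z /\ uf_mul op z x = y).
{ apply Mmin.
  - split; [exact (closed_mulr Mc MU Dx)|split].
    + exists (uf_mul op x x), x; auto.
    + intros y [z [Mz <-]]. exact (mul_uf (MU z Mz) Dx).
  - intros a b [z1 [Mz1 <-]] [z2 [Mz2 <-]].
    exists (uf_mul op (uf_mul op z1 x) z2). split; [exact (SM _ _ (SM _ _ Mz1 Mx) Mz2)|].
    exact (mul_assoc (MU _ (SM _ _ Mz1 Mx)) (MD z2 Mz2) (delta_uf Dx)).
  - intros y [z [Mz <-]]. exact (SM z x Mz Mx). }
destruct (M_sub_Mx x Mx) as [z0 [Mz0 Ez0]].
assert (M_fixes_x : forall y, M y -> M y /\ uf_mul op y x = x).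
{ apply Mmin.
  - split; [exact (closed_mulr_fiber Mc MU Dx (delta_uf Dx))|split].
    + exists z0; auto.
    + intros y [My _]; exact (MU y My).
  - intros a b [Ma Ea] [Mb Eb]. split; [exact (SM a b Ma Mb)|].
    rewrite (mul_assoc (MU a Ma) (MD b Mb) (delta_uf Dx)), Eb; exact Ea.
  - intros y [My _]; exact My. }
exists x; split; [exact (MX0 x Mx)|exact (proj2 (M_fixes_x x Mx))].
Qed.

End DeltaSemigroup.

Section Homomorphism.
Variables (S T : Type) (opS : S -> S -> option S) (opT : T -> T -> option T) (h : S -> T).
Hypothesis homh : ps_hom opS opT h.

Lemma hext_mul p q : ultrafilter p -> deltaS opS q ->
  hext h (uf_mul opS p q) = uf_mul opT (hext h p) (hext h q).
Proof.
intros Up [Uq Dq]. apply functional_extensionality; intros B.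
apply propositional_extensionality. unfold hext, uf_mul.
assert (Hs : forall s, q (sinv opS s (fun x => B (h x))) <->
                       q (fun t => sinv opT (h s) B (h t))).
{ intros s.
  assert (Ht : forall t, phi opS s t ->
            (sinv opS s (fun x => B (h x)) t <-> sinv opT (h s) B (h t))).
  { intros t st. unfold phi in st. destruct (opS s t) as [u|] eqn:E; [|congruence].
    pose proof (homh E) as Eh. split.
    - intros [u' [E' Bu]]. rewrite E in E'; injection E' as <-. exists (h u); auto.
    - intros [w [Ew Bw]]. rewrite Eh in Ew; injection Ew as <-. exists u; auto. }
  split; apply (uf_agree Uq (Dq s)); intros t st; [|symmetry]; exact (Ht t st). }
split; intros H; apply (uf_mono Up H); intros s; apply Hs.
Qed.

Hypothesis assocS : ps_assoc opS.
Hypothesis hext_delta : forall p, deltaS opS p -> deltaS opT (hext h p).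
Hypothesis hext_delta_onto : forall q, deltaS opT q -> exists p, deltaS opS p /\ hext h p = q.

Lemma hext_Kdelta p : Kdelta opS p -> Kdelta opT (hext h p).
Proof.
intros [Dp Kp]. split; [exact (hext_delta Dp)|].
intros J [[q0 Jq0] [JD JI]].
refine (proj2 (Kp (fun p' => deltaS opS p' /\ J (hext h p')) _)).
split; [|split].
- destruct (hext_delta_onto (JD q0 Jq0)) as [p0 [Dp0 <-]]. exists p0; auto.
- intros p' [Dp' _]; exact Dp'.
- intros p1 q1 Dp1 [Dq1 Jq1].
  destruct (JI _ _ (hext_delta Dp1) Jq1) as [J1 J2].
  split; split.
  + exact (mul_delta assocS Dp1 Dq1).
  + rewrite (hext_mul (delta_uf Dp1) Dq1); exact J1.
  + exact (mul_delta assocS Dq1 Dp1).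
  + rewrite (hext_mul (delta_uf Dq1) Dp1); exact J2.
Qed.

Lemma hext_Kdelta_onto q : Kdelta opT q -> exists p, Kdelta opS p /\ hext h p = q.
Proof.
intros [Dq Kq]. apply (Kq (fun q' => exists p, Kdelta opS p /\ hext h p = q')).
destruct (hext_delta_onto Dq) as [p1 [Dp1 _]].
destruct (Kdelta_exists assocS (ex_intro _ p1 Dp1)) as [p0 Kp0].
split; [|split].
- exists (hext h p0), p0; auto.
- intros q' [p [Kp <-]]. exact (proj1 (hext_Kdelta Kp)).
- intros q1 q' Dq1 [p [Kp <-]].
  destruct (hext_delta_onto Dq1) as [x [Dx <-]].
  split; [exists (uf_mul opS x p)|exists (uf_mul opS p x)]; split.
  + exact (Kdelta_mull assocS Kp Dx).
  + exact (hext_mul (delta_uf Dx) (proj1 Kp)).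
  + exact (Kdelta_mulr assocS Kp Dx).
  + exact (hext_mul (delta_uf (proj1 Kp)) Dx).
Qed.

Lemma central_img A : central opS A -> central opT (img h A).
Proof.
intros [p [Kp [Ip pA]]]. pose proof (proj1 Kp) as Dp.
exists (hext h p). split; [exact (hext_Kdelta Kp)|split].
- rewrite <- (hext_mul (delta_uf Dp) Dp), Ip; reflexivity.
- apply (uf_mono (delta_uf Dp) pA). intros s As; exists s; auto.
Qed.

Lemma central_preim A : central opT A -> central opS (preim h A).
Proof.
intros [q [Kq [Iq qA]]].
destruct (hext_Kdelta_onto Kq) as [p [Kp Ep]]. pose proof (proj1 Kp) as Dp.
pose (L := fun y => exists x, deltaS opS x /\ uf_mul opS x p = y).
assert (LK : forall y, L y -> Kdelta opS y).
{ intros y [x [Dx <-]]. exact (Kdelta_mull assocS Kp Dx). }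
assert (LD : forall y, L y -> deltaS opS y) by (intros y Ly; exact (proj1 (LK y Ly))).
assert (L_closed : closed L) by exact (closed_mulr (@delta_closed S opS) (@delta_uf S opS) Dp).
destruct (closed_subsemigroup_idempotent assocS (X0 := fun y => L y /\ hext h y = q))
  as [x [[Lx Ex] Ixx]].
- split; [|split].
  + apply (closed_fiber (g := fun B s => B (h s)) L_closed).
    * intros c Lc; exact (delta_uf (LD c Lc)).
    * intros c Lc; exact (delta_uf (hext_delta (LD c Lc))).
    * exact (delta_uf (proj1 Kq)).
  + exists (uf_mul opS p p). split; [exists p; auto|].
    rewrite (hext_mul (delta_uf Dp) Dp), Ep; exact Iq.
  + intros y [Ly _]; exact (delta_uf (LD y Ly)).
- intros y [Ly _]; exact (LD y Ly).
- intros a b [La Ea] [[x2 [Dx2 <-]] Eb]. split.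
  + exists (uf_mul opS a x2). split; [exact (mul_delta assocS (LD a La) Dx2)|].
    exact (mul_assoc assocS (delta_uf (LD a La)) Dx2 (delta_uf Dp)).
  + rewrite (hext_mul (delta_uf (LD a La)) (mul_delta assocS Dx2 Dp)), Ea, Eb; exact Iq.
- exists x. split; [exact (LK x Lx)|split; [exact Ixx|]].
  change (hext h x A). rewrite Ex; exact qA.
Qed.

End Homomorphism.

Theorem theorem5p6 (S T : Type) (opS : S -> S -> option S) (opT : T -> T -> option T)
  (h : S -> T)
  (assocS : ps_assoc opS) (commS : ps_comm opS) (adeqS : adequate opS)
  (assocT : ps_assoc opT) (commT : ps_comm opT) (adeqT : adequate opT)
  (homh : ps_hom opS opT h) (surjh : forall t, exists s, h s = t)
  (onto_into : forall p, deltaS opS p -> deltaS opT (hext h p))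
  (onto_onto : forall q, deltaS opT q -> exists p, deltaS opS p /\ hext h p = q) :
  ((forall p, Kdelta opS p -> Kdelta opT (hext h p)) /\
   (forall q, Kdelta opT q -> exists p, Kdelta opS p /\ hext h p = q)) /\
  (forall A : S -> Prop, central opS A -> central opT (img h A)) /\
  (forall A : T -> Prop, central opT A -> central opS (preim h A)).
Proof.
split; [split|split].
- exact (hext_Kdelta homh assocS onto_into onto_onto).
- exact (hext_Kdelta_onto homh assocS onto_into onto_onto).
- exact (central_img homh assocS onto_into onto_onto).
- exact (central_preim homh assocS onto_into onto_onto).
Qed.
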